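(* Let $\mathcal{S}=(P,N)$ be a sample with $P\neq\emptyset$, and let $\varphi$ be an LTL formula in negation normal form such that for every $M\in P$ and every state $s$ of $M$, $\mathrm{Pr}^{M}(s\models\varphi)=0$. Consider PLTL formulas of the form $\mathbf{P}_{>r}[\psi]$ with $r\in[0,1]$ and $\psi$ an LTL formula in negation normal form. If $\mathbf{P}_{>r}[\psi]$ is consistent with $\mathcal{S}$ and has minimal size among all consistent formulas of this form, then $\varphi$ is not a subformula of $\psi$.
   Context: A DTMC is a tuple $M=(S,s_I,P,\mathrm{AP},\ell)$ with finite state set $S$, initial state $s_I$, transition probabilities $P:S\times S\to[0,1]$, atomic propositions $\mathrm{AP}$ and labelling $\ell:S\to2^{\mathrm{AP}}$; $\mathrm{Pr}^M_s$ is the standard probability measure on infinite paths from $s$, and $\mathrm{Pr}^M(s\models\varphi)$ is the probability of the set of paths from $s$ satisfying the LTL formula $\varphi$. LTL formulas in negation normal form (NNF) are built from literals $p,\neg p$ ($p\in\mathrm{AP}$) using $\land,\lor,\mathbf{X},\mathbf{F},\mathbf{G},\mathbf{U}$ (negation only applied to atomic propositions), with the standard path semantics ($\mathbf{F}\varphi=\mathrm{true}\,\mathbf{U}\,\varphi$, $\mathbf{G}\varphi=\neg\mathbf{F}\neg\varphi$). The size of a formula is the number of occurrences of operators in $\{\mathbf{F},\mathbf{X},\mathbf{G},\mathbf{U},\land,\lor\}$ plus the number of occurrences of literals; the size of $\mathbf{P}_{>r}[\psi]$ is the size of $\psi$. A state $s$ satisfies $\mathbf{P}_{>r}[\psi]$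 iff $\mathrm{Pr}^M(s\models\psi)>r$, and a DTMC satisfies it iff its initial state does. A sample $\mathcal{S}=(P,N)$ consists of finite sets $P$ (positive) and $N$ (negative) of DTMCs over the same $\mathrm{AP}$; a formula is consistent with $\mathcal{S}$ if all DTMCs in $P$ satisfy it and no DTMC in $N$ satisfies it. *)

From HB Require Import structures.
From mathcomp Require Import all_boot all_order all_algebra.
From mathcomp Require Import all_classical all_reals all_analysis.
From Stdlib Require List.

Set Implicit Arguments.
Unset Strict Implicit.
Unset Printing Implicit Defensive.

Import Order.TTheory GRing.Theory Num.Theory.
Local Open Scope classical_set_scope.
Local Open Scope ring_scope.

Record dtmc (AP : finType) (R : realType) := DTMC {
  state : finType;
  init : state;
  trans : state -> state -> R;
  trans_ge0 : forall s t, 0 <= trans s t;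
  trans_sum1 : forall s, \sum_(t : state) trans s t = 1;
  label : state -> {set AP}
}.
Arguments init {AP R} _.
Arguments trans {AP R} _ _ _.
Arguments label {AP R} _ _.

Definition rawpath AP R (M : dtmc AP R) := nat -> state M.
HB.instance Definition _ AP R (M : dtmc AP R) :=
  Choice.on (rawpath M).
HB.instance Definition _ AP R (M : dtmc AP R) :=
  isPointed.Build (rawpath M) (fun _ => init M).

Definition cyl AP R (M : dtmc AP R) (w : seq (state M)) : set (rawpath M) :=
  [set pi | forall i, (i < size w)%N -> pi i = nth (init M) w i].
Arguments cyl {AP R} M w.

Definition cylinders AP R (M : dtmc AP R) : set (set (rawpath M)) :=
  range (@cyl AP R M).
Arguments cylinders {AP R} M.

Definition path AP R (M : dtmc AP R) := g_sigma_algebraType (cylinders M).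
Arguments path {AP R} M.

Fixpoint wprob AP R (M : dtmc AP R) (x : state M) (w : seq (state M)) : R :=
  match w with
  | [::] => 1
  | y :: w' => trans M x y * wprob y w'
  end.
Arguments wprob {AP R} M x w.

(* mu is the standard probability measure Pr^M_s on infinite paths from s:
   it is the (unique) probability measure on the sigma-algebra generated by
   cylinders which gives each cylinder of t w_1 ... w_n the probability
   [t = s] * P(t,w_1) * ... * P(w_{n-1},w_n). *)
Definition is_path_measure AP R (M : dtmc AP R) (s : state M)
  (mu : probability (path M) R) : Prop :=
  forall (t : state M) (w : seq (state M)),
    mu (cyl M (t :: w)) = (((t == s)%:R * wprob M t w)%:E)%E.

Inductive ltl (AP : Type) :=
  | Lit of AP
  | NLit of AP
  | And of ltl AP & ltl AP
  | Or of ltl AP & ltl AP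
  | Next of ltl AP
  | Ev of ltl AP
  | Alw of ltl AP
  | Until of ltl AP & ltl AP.
Arguments Lit {AP}.
Arguments NLit {AP}.

Fixpoint sat AP R (M : dtmc AP R) (pi : rawpath M) (i : nat) (phi : ltl AP)
  : Prop :=
  match phi with
  | Lit p => p \in label M (pi i)
  | NLit p => p \notin label M (pi i)
  | And a b => sat pi i a /\ sat pi i b
  | Or a b => sat pi i a \/ sat pi i b
  | Next a => sat pi i.+1 a
  | Ev a => exists k, (i <= k)%N /\ sat pi k a
  | Alw a => forall k, (i <= k)%N -> sat pi k a
  | Until a b => exists k, [/\ (i <= k)%N, sat pi k b &
                           forall j, (i <= j < k)%N -> sat pi j a]
  end.

Definition sat_set AP R (M : dtmc AP R) (phi : ltl AP) : set (path M) :=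
  [set pi | sat (pi : rawpath M) 0 phi].
Arguments sat_set {AP R} M phi.

Fixpoint ltl_size AP (phi : ltl AP) : nat :=
  match phi with
  | Lit _ | NLit _ => 1
  | And a b | Or a b | Until a b => (ltl_size a + ltl_size b).+1
  | Next a | Ev a | Alw a => (ltl_size a).+1
  end.

Fixpoint subformula AP (phi psi : ltl AP) : Prop :=
  phi = psi \/
  match psi with
  | Lit _ | NLit _ => False
  | And a b | Or a b | Until a b => subformula phi a \/ subformula phi b
  | Next a | Ev a | Alw a => subformula phi a
  end.

Definition path_measures AP R :=
  forall M : dtmc AP R, state M -> probability (path M) R.

Definition PrSat AP R (Pr : path_measures AP R) (M : dtmc AP R)
  (s : state M) (phi : ltl AP) : \bar R :=
  Pr M s (sat_set M phi).
Arguments PrSat {AP R} Pr M s phi.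

Definition sat_PLTL AP R (Pr : path_measures AP R) (M : dtmc AP R)
  (r : R) (psi : ltl AP) : Prop :=
  (r%:E < PrSat Pr M (init M) psi)%E.

Definition consistent AP R (Pr : path_measures AP R)
  (Pos Neg : seq (dtmc AP R)) (r : R) (psi : ltl AP) : Prop :=
  (forall M, List.In M Pos -> sat_PLTL Pr M r psi) /\
  (forall M, List.In M Neg -> ~ sat_PLTL Pr M r psi).

(* Let [F phi] be the set of paths on which [phi] holds at some position.
   By the Markov property Pr_s(shift^-1 A) = sum_t P(s,t) Pr_t(A), so if [phi]
   is null from every state of a positive chain, so is "[phi] at position i"
   for each i, and hence [F phi].  Replacing the occurrence of [phi] in [psi]
   by false and simplifying either shows that [psi] itself forces [F phi],
   so that [psi] has probability 0 <= r on a positive chain, or yields a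
   strictly smaller [psi'] with [psi' => psi] and [psi => psi' \/ F phi].
   Then P_{>r}[psi'] is still consistent: positive chains lose at most the
   null set [F phi], negative chains can only lose probability.  This
   contradicts minimality. *)

From Pilot Require Import Defs.
From HB Require Import structures.
From mathcomp Require Import all_boot all_order all_algebra.
From mathcomp Require Import all_classical all_reals all_analysis.
Import Order.TTheory GRing.Theory Num.Theory.
Local Open Scope classical_set_scope.
Local Open Scope ring_scope.

Local Notation paths M := (Defs.path M).

Section Cylinders.
Context {AP : finType} {R : realType} (M : dtmc AP R).

Lemma measurable_cyl (w : seq (state M)) : measurable (cyl M w : set (paths M)).
Proof. by apply: sub_gen_smallest; exists w. Qed.

(* [X] is the countable union of the cylinders of its admissible prefixes. *)
Lemma measurable_prefix_determined (X : set (paths M)) n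
    (Q : seq (state M) -> Prop) :
  (forall pi : paths M, X pi <-> Q (mkseq pi n)) -> measurable X.
Proof.
move=> HX.
pose F (k : nat) : set (paths M) :=
  if (unpickle k : option (seq (state M))) is Some w then
    (if `[< size w = n /\ Q w >] then cyl M w else set0) else set0.
have -> : X = \bigcup_k F k.
  apply/seteqP; split => pi.
    move=> /HX Hq; exists (pickle (mkseq pi n)) => //.
    rewrite /F pickleK asboolT; last by rewrite size_mkseq.
    by move=> i; rewrite size_mkseq => Hi; rewrite nth_mkseq.
  case=> k _; rewrite /F; case: (unpickle k) => [w|//].
  case: asboolP => [[Hs Hw] Hc|//]; apply/HX.
  suff -> : mkseq pi n = w by [].
  apply: (@eq_from_nth _ (init M)); first by rewrite size_mkseq.
  by move=> i; rewrite size_mkseq => Hi; rewrite nth_mkseq // Hc // Hs.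
apply: bigcupT_measurable => k; rewrite /F; case: (unpickle k) => [w|//].
by case: asboolP => _; [exact: measurable_cyl|].
Qed.

Lemma measurable_sat (f : ltl AP) i :
  measurable [set pi : paths M | sat pi i f].
Proof.
elim: f i => [p|p|a IHa b IHb|a IHa b IHb|a IHa|a IHa|a IHa|a IHa b IHb] i /=.
- apply: (@measurable_prefix_determined _ i.+1
    (fun u => p \in label M (nth (init M) u i))).
  by move=> pi; rewrite nth_mkseq.
- apply: (@measurable_prefix_determined _ i.+1
    (fun u => p \notin label M (nth (init M) u i))).
  by move=> pi; rewrite nth_mkseq.
- exact: measurableI (IHa i) (IHb i).
- exact: measurableU (IHa i) (IHb i).
- exact: IHa.
- rewrite (_ : [set _ | _] =
    \bigcup_(k in [set k | (i <= k)%N]) [set pi : paths M | sat pi k a]).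
    by apply: bigcup_measurable => k _; exact: IHa.
  by apply/seteqP; split => pi /= [k]; [case=> ik ?|move=> ik ?]; exists k.
- rewrite (_ : [set _ | _] =
    \bigcap_(k in [set k | (i <= k)%N]) [set pi : paths M | sat pi k a]).
    by apply: bigcap_measurable => [|k _]; [exists i => /=|exact: IHa].
  by apply/seteqP; split => pi /=.
- rewrite (_ : [set _ | _] = \bigcup_(k in [set k | (i <= k)%N])
     ([set pi : paths M | sat pi k b] `&`
      \bigcap_j (if (i <= j < k)%N then [set pi : paths M | sat pi j a]
                 else setT))).
    apply: bigcup_measurable => k _; apply: measurableI; first exact: IHb.
    by apply: bigcapT_measurable => j; case: ifP.
  apply/seteqP; split => pi /=.
    case=> k [ik Hb Ha]; exists k => //; split => // j _.
    by case: ifP => // /Ha.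
  case=> k ik [Hb Ha]; exists k; split => // j ijk.
  by have := Ha j I; rewrite ijk.
Qed.

Lemma cyl_nil : cyl M [::] = setT.
Proof. by apply/seteqP; split => pi //= _ i. Qed.

Definition cylinders0 : set (set (paths M)) :=
  [set X | X = set0 \/ cylinders M X].

Lemma measurable_cylinders0 : @measurable _ (paths M) = <<s cylinders0 >>.
Proof.
apply/seteqP; split; apply: smallest_sub; try exact: smallest_sigma_algebra.
  by move=> X HX; apply: sub_gen_smallest; right.
by move=> X [->|HX]; [exact: measurable0|exact: sub_gen_smallest].
Qed.

Lemma setI_closed_cylinders0 : setI_closed cylinders0.
Proof.
move=> X Y [->|[u _ <-]]; first by rewrite set0I; left.
move=> [->|[v _ <-]]; first by rewrite setI0; left.
have [->|/set0P[pi [piu piv]]] := eqVneq (cyl M u `&` cyl M v) set0.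
  by left.
have nested (u' v' : seq (state M)) : (size u' <= size v')%N ->
    cyl M u' pi -> cyl M v' pi -> cyl M u' `&` cyl M v' = cyl M v'.
  move=> uv piu' piv'; apply/seteqP; split => [x []//|x xv]; split => // i iu.
  by rewrite -piu' // xv ?piv' //; exact: leq_trans uv.
right; have [uv|vu] := leqP (size u) (size v).
  by exists v => //; rewrite nested.
by exists u => //; rewrite setIC nested // ltnW.
Qed.

End Cylinders.

Section Shift.
Context {AP : finType} {R : realType} {M : dtmc AP R}.

Definition shift (pi : paths M) : paths M := fun n => pi n.+1.

Lemma sat_shift (f : ltl AP) (pi : paths M) i :
  sat pi i.+1 f <-> sat (shift pi) i f.
Proof.
elim: f pi i => [p|p|a IHa b IHb|a IHa b IHb|a IHa|a IHa|a IHa|a IHa b IHb]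
  pi i //=.
- by rewrite IHa IHb.
- by rewrite IHa IHb.
- split => [[[|k] [ik Ha]] //|[k [ik Ha]]].
    by exists k; split => //; exact/IHa.
  by exists k.+1; split => //; exact/IHa.
- split => [H k ik|H [//|k] ik]; apply/IHa; exact: H.
- split => [[[|k] [ik Hb Ha]] //|[k [ik Hb Ha]]].
    by exists k; split => [//||j ijk]; [exact/IHb|apply/IHa/Ha].
  exists k.+1; split => [//||[//|j] ijk]; [exact/IHb|exact/IHa/Ha].
Qed.

Lemma measurable_shift : measurable_fun setT shift.
Proof.
apply: (@measurability _ _ _ _ setT shift (cylinders M)) => //.
move=> _ [_ [w _ <-] <-]; rewrite setTI.
apply: (@measurable_prefix_determined _ _ M _ (size w).+1
   (fun u => forall j, (j < size w)%N ->
               nth (init M) u j.+1 = nth (init M) w j)).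
by move=> pi; split => H j Hj; have := H j Hj; rewrite nth_mkseq ?ltnS.
Qed.

Lemma measurable_preimage_shift (A : set (paths M)) :
  measurable A -> measurable (shift @^-1` A).
Proof.
by move=> mA; rewrite -[X in measurable X]setTI; exact: measurable_shift.
Qed.

Lemma cyl_start_shift s t w :
  shift @^-1` cyl M (t :: w) `&` cyl M [:: s] = cyl M [:: s, t & w].
Proof.
apply/seteqP; split => pi.
  by case=> Hw Hs [|i] Hi; [exact: Hs|exact: Hw].
by move=> H; split => [i Hi|[]// _]; [exact: (H i.+1)|exact: (H 0)].
Qed.

End Shift.

Section MarkovProperty.
Context {AP : finType} {R : realType} (M : dtmc AP R).
Variable Pr : state M -> probability (paths M) R.
Hypothesis HPr : forall s, is_path_measure s (Pr s).

Section StepMeasure.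
Variable s : state M.

Definition step_measure (A : set (paths M)) : \bar R :=
  \sum_(t : state M) ((trans M s t)%:E * Pr t A)%E.

Let step_measure0 : step_measure set0 = 0%E.
Proof. by rewrite /step_measure big1 // => t _; rewrite measure0 mule0. Qed.

Let step_measure_ge0 A : (0 <= step_measure A)%E.
Proof. by apply: sume_ge0 => t _; rewrite mule_ge0 ?lee_fin ?trans_ge0. Qed.

Let step_measure_sigma_additive : semi_sigma_additive step_measure.
Proof.
move=> F mF tF mUF; rewrite [X in _ --> X](_ : _ =
    lim ((fun n => \sum_(0 <= i < n) step_measure (F i)) @ \oo)).
  by apply: is_cvg_ereal_nneg_natsum => k _; exact: step_measure_ge0.
rewrite nneseries_sum;
  last by move=> t j _; rewrite mule_ge0 ?lee_fin ?trans_ge0.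
by apply: eq_bigr => t _; rewrite nneseriesZl // measure_semi_bigcup.
Qed.

HB.instance Definition _ := isMeasure.Build _ _ _ step_measure
  step_measure0 step_measure_ge0 step_measure_sigma_additive.

End StepMeasure.

Lemma pr_setI_cyl_start s (X : set (paths M)) :
  measurable X -> Pr s X = Pr s (X `&` cyl M [:: s]).
Proof.
move=> mX.
have mC : measurable (cyl M [:: s] : set (paths M)) by exact: measurable_cyl.
have notC0 : Pr s (~` cyl M [:: s]) = 0%E.
  by rewrite probability_setC // HPr eqxx mul1r subee.
rewrite (measureDI _ mX mC)
  (@subset_measure0 _ _ _ _ _ (~` cyl M [:: s] : set (paths M))) ?add0e //.
- exact: measurableD.
- exact: measurableC.
Qed.

Lemma pr_shift s A : measurable A ->
  Pr s (shift @^-1` A) = step_measure s A.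
Proof.
(* Both sides are measures (the left one is the image of [Pr s] under
   [shift]) agreeing on the pi-system of cylinders. *)
move=> mA; change (pushforward (Pr s) shift A = step_measure s A).
apply: (measure_unique (cylinders0 M) (fun _ => setT) (measurable_cylinders0 M)
  (setI_closed_cylinders0 M)) => //.
- by move=> _; right; exists [::] => //; rewrite cyl_nil.
- by rewrite bigcup_const.
- exact: measurable_shift.
- move=> mshift _ [->|[w _ <-]]; first by rewrite !measure0.
  change (Pr s (shift @^-1` cyl M w) = step_measure s (cyl M w)).
  case: w => [|t w].
    rewrite cyl_nil preimage_setT probability_setT /step_measure.
    under eq_bigr do rewrite probability_setT mule1.
    by rewrite sumEFin trans_sum1.
  rewrite /step_measure (bigD1 t) //= big1 ?adde0; last first.
    by move=> u /negbTE ut; rewrite HPr eq_sym ut mul0r mule0.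
  rewrite pr_setI_cyl_start;
    last by apply: measurable_preimage_shift; exact: measurable_cyl.
  by rewrite cyl_start_shift !HPr !eqxx !mul1r.
- move=> mshift _.
  by change (Pr s (shift @^-1` setT) < +oo)%E; rewrite probability_setT ltry.
Qed.

Lemma pr_shift0 A : measurable A -> (forall t, Pr t A = 0%E) ->
  forall s, Pr s (shift @^-1` A) = 0%E.
Proof.
move=> mA A0 s; rewrite pr_shift // /step_measure big1 // => t _.
by rewrite A0 mule0.
Qed.

End MarkovProperty.

Section Weakening.
Context {AP : finType} (R : realType) (phi : ltl AP).

Definition ltl_entails (a b : ltl AP) : Prop :=
  forall (M : dtmc AP R) (pi : rawpath M) i, sat pi i a -> sat pi i b.

Definition entails_eventually (psi : ltl AP) : Prop :=
  forall (M : dtmc AP R) (pi : rawpath M) i,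
    sat pi i psi -> exists j, sat pi j phi.

Definition entails_or_eventually (a b : ltl AP) : Prop :=
  forall (M : dtmc AP R) (pi : rawpath M) i,
    sat pi i a -> sat pi i b \/ exists j, sat pi j phi.

(* [psi'] plays the role of [psi] with the occurrence of [phi] replaced by
   [false] and the result simplified. *)
Definition shrinkable (psi : ltl AP) : Prop :=
  exists psi', [/\ (ltl_size psi' < ltl_size psi)%N, ltl_entails psi' psi
                 & entails_or_eventually psi psi'].

Definition reducible (psi : ltl AP) : Prop :=
  entails_eventually psi \/ shrinkable psi.

Lemma reducible_self : reducible phi.
Proof. by left => M pi i h; exists i. Qed.

Lemma reducible_AndL a b : reducible a -> reducible (And a b).
Proof.
case=> [Ha|[a' [lt imp rev]]]; first by left => M pi i [/Ha].
right; exists (And a' b); split; first by rewrite /= ltnS ltn_add2r.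
  by move=> M pi i [/imp].
by move=> M pi i [/rev [h|h] hb]; [left|right].
Qed.

Lemma reducible_AndR a b : reducible b -> reducible (And a b).
Proof.
case=> [Hb|[b' [lt imp rev]]]; first by left => M pi i [_ /Hb].
right; exists (And a b'); split; first by rewrite /= ltnS ltn_add2l.
  by move=> M pi i [ha /imp].
by move=> M pi i [ha /rev [h|h]]; [left|right].
Qed.

Lemma reducible_OrL a b : reducible a -> reducible (Or a b).
Proof.
case=> [Ha|[a' [lt imp rev]]].
  right; exists b; split; first by rewrite /= ltnS leq_addl.
    by move=> M pi i h; right.
  by move=> M pi i [/Ha|h]; [right|left].
right; exists (Or a' b); split; first by rewrite /= ltnS ltn_add2r.
  by move=> M pi i [/imp|]; [left|right].
by move=> M pi i [/rev [h|h]|h]; [left; left|right|left; right].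
Qed.

Lemma reducible_OrR a b : reducible b -> reducible (Or a b).
Proof.
case=> [Hb|[b' [lt imp rev]]].
  right; exists a; split; first by rewrite /= ltnS leq_addr.
    by move=> M pi i h; left.
  by move=> M pi i [h|/Hb]; [left|right].
right; exists (Or a b'); split; first by rewrite /= ltnS ltn_add2l.
  by move=> M pi i [|/imp]; [left|right].
by move=> M pi i [h|/rev [h|h]]; [left; left|left; right|right].
Qed.

Lemma reducible_Next a : reducible a -> reducible (Next a).
Proof.
case=> [Ha|[a' [lt imp rev]]]; first by left => M pi i /Ha.
by right; exists (Next a'); split => // M pi i; [exact: imp|exact: rev].
Qed.

Lemma reducible_Ev a : reducible a -> reducible (Ev a).
Proof.
case=> [Ha|[a' [lt imp rev]]]; first by left => M pi i [k [_ /Ha]].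
right; exists (Ev a'); split => // M pi i [k [ik h]].
  by exists k; split => //; exact: imp.
by case: (rev _ _ _ h) => [h'|]; [left; exists k|right].
Qed.

Lemma reducible_Alw a : reducible a -> reducible (Alw a).
Proof.
case=> [Ha|[a' [lt imp rev]]]; first by left => M pi i /(_ i (leqnn i)) /Ha.
right; exists (Alw a'); split => // M pi i h.
  by move=> k ik; exact/imp/h.
have [[k [ik nk]]|all_a'] := pselect (exists k, (i <= k)%N /\ ~ sat pi k a').
  by case: (rev _ _ _ (h k ik)) => [//|]; right.
by left => k ik; apply: contrapT => nk; apply: all_a'; exists k.
Qed.

Lemma reducible_UntilL a b : reducible a -> reducible (Until a b).
Proof.
case=> [Ha|[a' [lt imp rev]]].
  right; exists b; split; first by rewrite /= ltnS leq_addl.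
    by move=> M pi i h; exists i; split => // j; rewrite ltnNge andbN.
  move=> M pi i [k [ik hb ha]]; have [ki|ik'] := leqP k i.
    by left; have <- : k = i by apply/eqP; rewrite eqn_leq ik ki.
  by right; apply: (Ha _ _ _ (ha i _)); rewrite leqnn ik'.
right; exists (Until a' b); split; first by rewrite /= ltnS ltn_add2r.
  by move=> M pi i [k [ik hb ha]]; exists k; split => // j /ha /imp.
move=> M pi i [k [ik hb ha]].
have [[j [ijk nj]]|all_a'] :=
  pselect (exists j, (i <= j < k)%N /\ ~ sat pi j a').
  by case: (rev _ _ _ (ha j ijk)) => [//|]; right.
left; exists k; split => // j ijk.
by apply: contrapT => nj; apply: all_a'; exists j.
Qed.

Lemma reducible_UntilR a b : reducible b -> reducible (Until a b).
Proof.
case=> [Hb|[b' [lt imp rev]]]; first by left => M pi i [k [_ /Hb]].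
right; exists (Until a b'); split; first by rewrite /= ltnS ltn_add2l.
  by move=> M pi i [k [ik /imp hb ha]]; exists k.
move=> M pi i [k [ik hb ha]].
by case: (rev _ _ _ hb) => [hb'|]; [left; exists k|right].
Qed.

Lemma subformula_reducible psi : subformula phi psi -> reducible psi.
Proof.
elim: psi => [p|p|a IHa b IHb|a IHa b IHb|a IHa|a IHa|a IHa|a IHa b IHb] /=
  [<-|]; try exact: reducible_self; try done.
- by case=> [/IHa/reducible_AndL|/IHb/reducible_AndR].
- by case=> [/IHa/reducible_OrL|/IHb/reducible_OrR].
- by move/IHa/reducible_Next.
- by move/IHa/reducible_Ev.
- by move/IHa/reducible_Alw.
- by case=> [/IHa/reducible_UntilL|/IHb/reducible_UntilR].
Qed.

End Weakening.

Section NullEventually.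
Context {AP : finType} {R : realType} (Pr : path_measures AP R).
Hypothesis HPr :
  forall (M : dtmc AP R) (s : state M), is_path_measure s (Pr M s).

Definition eventually_set (M : dtmc AP R) (phi : ltl AP) : set (paths M) :=
  \bigcup_j [set pi : paths M | sat pi j phi].

Lemma measurable_eventually_set M phi : measurable (eventually_set M phi).
Proof. by apply: bigcupT_measurable => j; exact: measurable_sat. Qed.

Lemma pr_sat_at0 (M : dtmc AP R) phi :
  (forall s, PrSat Pr M s phi = 0%E) ->
  forall i s, Pr M s [set pi : paths M | sat pi i phi] = 0%E.
Proof.
move=> phi0; elim=> [|i IH] s; first exact: phi0.
rewrite (_ : [set pi | _] = shift @^-1` [set pi : paths M | sat pi i phi]).
  by apply: pr_shift0 => //; exact: measurable_sat.
by apply/seteqP; split => pi /=; rewrite sat_shift.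
Qed.

Lemma pr_eventually_set0 (M : dtmc AP R) phi :
  (forall s, PrSat Pr M s phi = 0%E) ->
  forall s, Pr M s (eventually_set M phi) = 0%E.
Proof.
move=> phi0 s.
have [N [mN N0 sN]] : (Pr M s).-negligible (eventually_set M phi).
  apply: negligible_bigcup => j; exists [set pi : paths M | sat pi j phi].
  by split => //; [exact: measurable_sat|exact: pr_sat_at0].
exact: subset_measure0 (measurable_eventually_set _ _) mN sN N0.
Qed.

Lemma le_pr_sat_entails (M : dtmc AP R) s a b : ltl_entails R a b ->
  (PrSat Pr M s a <= PrSat Pr M s b)%E.
Proof.
move=> ab; apply: le_measure; rewrite ?inE; try exact: measurable_sat.
by move=> pi /ab.
Qed.

Lemma le_pr_sat_or_eventually (M : dtmc AP R) s phi a b :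
  entails_or_eventually R phi a b -> Pr M s (eventually_set M phi) = 0%E ->
  (PrSat Pr M s a <= PrSat Pr M s b)%E.
Proof.
move=> ab phi0; rewrite /PrSat -(measureU0 (measurable_sat _ b 0)
  (measurable_eventually_set M phi) phi0).
apply: le_measure; rewrite ?inE; first exact: measurable_sat.
  exact: measurableU (measurable_sat _ _ 0) (measurable_eventually_set M phi).
by move=> pi /ab [h|[j hj]]; [left|right; exists j].
Qed.

Lemma pr_sat_entails_eventually (M : dtmc AP R) s phi psi :
  entails_eventually R phi psi -> Pr M s (eventually_set M phi) = 0%E ->
  PrSat Pr M s psi = 0%E.
Proof.
move=> psiphi phi0; apply: subset_measure0 (measurable_sat _ _ 0)
  (measurable_eventually_set M phi) _ phi0.
by move=> pi /psiphi [j hj]; exists j.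
Qed.

End NullEventually.

Section Consistency.
Context {AP : finType} {R : realType} {Pr : path_measures AP R}.
Hypothesis HPr :
  forall (M : dtmc AP R) (s : state M), is_path_measure s (Pr M s).
Context {Pos Neg : seq (dtmc AP R)} {phi : ltl AP}.
Hypothesis phi_null :
  forall M, List.In M Pos -> forall s : state M, PrSat Pr M s phi = 0%E.

Lemma consistent_weaken r psi psi' :
  ltl_entails R psi' psi -> entails_or_eventually R phi psi psi' ->
  consistent Pr Pos Neg r psi -> consistent Pr Pos Neg r psi'.
Proof.
move=> imp rev [Hpos Hneg]; split => M HM.
  apply: lt_le_trans (Hpos M HM) _; apply: le_pr_sat_or_eventually rev _.
  by apply: pr_eventually_set0 => //; exact: phi_null.
move=> Hsat; apply: (Hneg M HM); apply: lt_le_trans Hsat _.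
exact: le_pr_sat_entails.
Qed.

Lemma not_consistent_entails_eventually r psi :
  Pos <> [::] -> 0 <= r -> entails_eventually R phi psi ->
  ~ consistent Pr Pos Neg r psi.
Proof.
case: Pos phi_null => // M Pos' null _ r0 psiphi [Hpos _].
have := Hpos M (or_introl erefl); rewrite /sat_PLTL.
rewrite (pr_sat_entails_eventually Pr M (init M) _ _ psiphi); last first.
  by apply: pr_eventually_set0 => //; apply: null; left.
by rewrite lte_fin ltNge r0.
Qed.

End Consistency.

Theorem lemma3 (AP : finType) (R : realType) (Pr : path_measures AP R)
  (HPr : forall (M : dtmc AP R) (s : state M), is_path_measure s (Pr M s))
  (Pos Neg : seq (dtmc AP R)) (phi psi : ltl AP) (r : R) :
  Pos <> [::] ->
  (forall M, List.In M Pos -> forall s : state M, PrSat Pr M s phi = 0%E) ->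
  0 <= r <= 1 ->
  consistent Pr Pos Neg r psi ->
  (forall (r' : R) (psi' : ltl AP), 0 <= r' <= 1 ->
     consistent Pr Pos Neg r' psi' -> (ltl_size psi <= ltl_size psi')%N) ->
  ~ subformula phi psi.
Proof.
move=> Pos0 phi_null r01 cons_psi minimal /(subformula_reducible R).
case=> [psiphi|[psi' [lt imp rev]]].
  by apply: (not_consistent_entails_eventually HPr phi_null) psiphi cons_psi;
    case/andP: r01.
have cons_psi' : consistent Pr Pos Neg r psi'.
  by apply: (consistent_weaken HPr phi_null) imp rev cons_psi.
by have := minimal r psi' r01 cons_psi'; rewrite leqNgt lt.
Qed.
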